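(* Let $\mathbb{F}$ be an algebraically closed field and let $n\ge 2$. Then there is no $n$-tuple $(B_1,\dots,B_n)$ of matrices in $M_n(\mathbb{F})$ that is strongly independent over $\mathbb{F}$.
   Context: An $n$-tuple $(B_1,\dots,B_n)$ of matrices in $M_n(\mathbb{F})$ is called strongly independent over $\mathbb{F}$ if for every nonzero column vector $v\in\mathbb{F}^{n\times 1}$, the vectors $B_1v,\dots,B_nv$ are linearly independent over $\mathbb{F}$. *)

From HB Require Import structures.
From mathcomp Require Import all_boot all_order all_algebra.
Set Implicit Arguments. Unset Strict Implicit. Unset Printing Implicit Defensive.
Import GRing.Theory.
Local Open Scope ring_scope.

Definition lin_indep (F : fieldType) (n m : nat) (w : 'I_m -> 'cV[F]_n) : Prop :=
  forall c : 'I_m -> F, \sum_(i < m) c i *: w i = 0 -> forall i, c i = 0.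

Definition strongly_independent (F : fieldType) (n : nat) (B : 'I_n -> 'M[F]_n) : Prop :=
  forall v : 'cV[F]_n, v != 0 -> lin_indep (fun i => B i *m v).

(* Let N v := images_mx B v, the square matrix whose i-th row is (B_i v)^T.
   Strong independence says that N v is invertible for every v <> 0, and N is
   linear in v. Over an algebraically closed field the pencil a N e_1 - N e_2
   is singular for some a (an eigenvalue of N e_2 (N e_1)^-1), so
   N (a e_1 - e_2) is singular although a e_1 - e_2 <> 0. *)
From mathcomp Require Import all_boot all_order all_algebra.
Set Implicit Arguments. Unset Strict Implicit. Unset Printing Implicit Defensive.
Import GRing.Theory.
Local Open Scope ring_scope.

Lemma closed_field_eigenvalue (F : closedFieldType) n (A : 'M[F]_n.+1) :
  exists a, eigenvalue A a.
Proof.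
have /closed_rootP [a rootAa] : size (char_poly A) != 1%N by rewrite size_char_poly.
by exists a; rewrite eigenvalue_root_char.
Qed.

Lemma left_kernel_not_unit (F : fieldType) n (A : 'M[F]_n) (c : 'rV_n) :
  c != 0 -> c *m A = 0 -> A \notin unitmx.
Proof.
move=> c_neq0 cA0; rewrite -row_free_unit.
by apply: contra c_neq0 => /mulmx_free_eq0 <-; rewrite cA0.
Qed.

Lemma pencil_not_unit (F : closedFieldType) n (A1 A2 : 'M[F]_n.+1) :
  A1 \in unitmx -> exists a, a *: A1 - A2 \notin unitmx.
Proof.
move=> A1_unit; pose g := A2 *m invmx A1.
have [a /eigenvalueP [c cg c_neq0]] := closed_field_eigenvalue g.
exists a; apply: (left_kernel_not_unit c_neq0).
have -> : A2 = g *m A1 by rewrite mulmxKV.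
by rewrite mulmxBr mulmxA cg -scalemxAl -scalemxAr subrr.
Qed.

Lemma lin_indep_row_free (F : fieldType) m n (w : 'I_m -> 'cV[F]_n) :
  lin_indep w -> row_free (\matrix_i (w i)^T).
Proof.
move=> indep_w; apply: inj_row_free => c c0; apply/rowP => i; rewrite mxE.
apply: indep_w i; apply: trmx_inj.
rewrite linear_sum [RHS]trmx0 -[RHS]c0 mulmx_sum_row.
by apply: eq_bigr => j _; rewrite rowK linearZ.
Qed.

Definition images_mx (R : pzRingType) m p n (B : 'I_m -> 'M[R]_(p, n))
    (v : 'cV_n) : 'M_(m, p) :=
  \matrix_i (B i *m v)^T.

Lemma images_mxZB (R : comPzRingType) m p n (B : 'I_m -> 'M[R]_(p, n))
    (a : R) (u v : 'cV_n) :
  images_mx B (a *: u - v) = a *: images_mx B u - images_mx B v.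
Proof.
apply/row_matrixP => i; rewrite linearB linearZ /= !rowK.
by rewrite mulmxBr -scalemxAr linearB linearZ.
Qed.

Lemma strongly_independent_unitmx (F : fieldType) n (B : 'I_n -> 'M[F]_n)
    (v : 'cV_n) :
  strongly_independent B -> v != 0 -> images_mx B v \in unitmx.
Proof.
by move=> indepB v_neq0; rewrite -row_free_unit; apply/lin_indep_row_free/indepB.
Qed.

Theorem theorem1p6 (F : closedFieldType) (n : nat) (hn : (2 <= n)%N) :
  ~ exists B : 'I_n -> 'M[F]_n, strongly_independent B.
Proof.
case: n hn => [|[|n]] // _ [B indepB].
pose e i : 'cV[F]_n.+2 := delta_mx i 0.
have e0_neq0 : e ord0 != 0.
  by apply/negP => /eqP/matrixP/(_ ord0 0); rewrite !mxE eqxx => /eqP; rewrite oner_eq0.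
have [a] := pencil_not_unit (images_mx B (e ord_max))
  (strongly_independent_unitmx indepB e0_neq0).
have v_neq0 : a *: e ord0 - e ord_max != 0.
  apply/negP => /eqP/matrixP/(_ ord_max 0); rewrite !mxE !eqxx /= mulr0 add0r.
  by move/eqP; rewrite oppr_eq0 oner_eq0.
by rewrite -images_mxZB (strongly_independent_unitmx indepB v_neq0).
Qed.
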